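(* Let $(X,\mathcal{E})$ be an unbounded discrete ballean. The following conditions are equivalent: (1) $(X,\mathcal{E})$ is ultradiscrete; (2) $(X,\mathcal{E})$ is extremely normal; (3) $(X,\mathcal{E})$ is ultranormal; (4) $(X,\mathcal{E})$ is maximal and irresolvable.
   Context: A ballean $(X,\mathcal{E})$ is a set with a coarse structure (a family of subsets of $X\times X$ each containing the diagonal, closed under composition, inverses, and taking subsets containing the diagonal, and covering every pair of points). $E[x]=\{y:(x,y)\in E\}$, $E[A]=\bigcup_{a\in A}E[a]$. $Y$ is bounded if $Y\subseteq E[x]$ for some $x$ and $E\in\mathcal{E}$; $\mathcal{B}_X$ denotes the family of bounded sets. $A$ is large if $X=E[A]$ for some $E\in\mathcal{E}$. Subsets $Y,Z$ are asymptotically disjoint if $E[Y]\cap E[Z]$ is bounded for every $E\in\mathcal{E}$. An unbounded ballean is ultranormal if no two unbounded subsets are asymptotically disjoint; extremely normal if every unbounded subset is large; maximal if $X$ is bounded with respect to every coarse structure strictly containing $\mathcal{E}$; irresolvable if $X$ cannot be partitioned into two large subsets. The ballean is discrete if for every $E\in\mathcal{E}$ there is a bounded $B$ with $E[x]=\{x\}$ for all $x\in X\setminus B$. An unbounded discrete ballean is ultradiscrete if $\{X\setminus B: B\in\mathcal{B}_X\}$ is an ultrafilter on $X$. *)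

Set Implicit Arguments.

Section Ballean.
Variable X : Type.

Definition rel := X -> X -> Prop.
Definition coarse_family := rel -> Prop.

(* E[x] = {y : (x,y) in E};  E[A] = union of E[a], a in A *)
Definition ball (E : rel) (x : X) : X -> Prop := fun y => E x y.
Definition ballA (E : rel) (A : X -> Prop) : X -> Prop :=
  fun y => exists a, A a /\ E a y.

Definition contains_diag (E : rel) : Prop := forall x, E x x.
Definition comp (E F : rel) : rel := fun x z => exists y, E x y /\ F y z.
Definition inv (E : rel) : rel := fun x y => E y x.

Definition coarse_structure (EE : coarse_family) : Prop :=
  (forall E, EE E -> contains_diag E) /\
  (forall E F, EE E -> EE F -> EE (comp E F)) /\
  (forall E, EE E -> EE (inv E)) /\
  (forall E E', EE E -> contains_diag E' -> (forall x y, E' x y -> E x y) -> EE E') /\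
  (forall x y, exists E, EE E /\ E x y).

Definition bounded (EE : coarse_family) (Y : X -> Prop) : Prop :=
  exists x E, EE E /\ forall y, Y y -> ball E x y.

Definition unbounded_ballean (EE : coarse_family) : Prop :=
  ~ bounded EE (fun _ => True).

Definition large (EE : coarse_family) (A : X -> Prop) : Prop :=
  exists E, EE E /\ forall y, ballA E A y.

Definition asymptotically_disjoint (EE : coarse_family) (Y Z : X -> Prop) : Prop :=
  forall E, EE E -> bounded EE (fun x => ballA E Y x /\ ballA E Z x).

Definition ultranormal (EE : coarse_family) : Prop :=
  unbounded_ballean EE /\
  ~ exists Y Z, ~ bounded EE Y /\ ~ bounded EE Z /\ asymptotically_disjoint EE Y Z.

Definition extremely_normal (EE : coarse_family) : Prop :=
  unbounded_ballean EE /\ forall Y, ~ bounded EE Y -> large EE Y.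

Definition strictly_contains (EE' EE : coarse_family) : Prop :=
  (forall E, EE E -> EE' E) /\ exists E, EE' E /\ ~ EE E.

Definition maximal (EE : coarse_family) : Prop :=
  unbounded_ballean EE /\
  forall EE', coarse_structure EE' -> strictly_contains EE' EE ->
    bounded EE' (fun _ => True).

Definition irresolvable (EE : coarse_family) : Prop :=
  unbounded_ballean EE /\
  ~ exists A : X -> Prop, large EE A /\ large EE (fun x => ~ A x).

Definition discrete (EE : coarse_family) : Prop :=
  forall E, EE E -> exists B, bounded EE B /\
    forall x, ~ B x -> forall y, (E x y <-> y = x).

Definition is_ultrafilter (F : (X -> Prop) -> Prop) : Prop :=
  F (fun _ => True) /\
  ~ F (fun _ => False) /\
  (forall A B, F A -> (forall x, A x -> B x) -> F B) /\
  (forall A B, F A -> F B -> F (fun x => A x /\ B x)) /\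
  (forall A, F A \/ F (fun x => ~ A x)).

Definition cobounded_family (EE : coarse_family) : (X -> Prop) -> Prop :=
  fun A => exists B, bounded EE B /\ forall x, A x <-> ~ B x.

Definition ultradiscrete (EE : coarse_family) : Prop :=
  unbounded_ballean EE /\ discrete EE /\ is_ultrafilter (cobounded_family EE).

End Ballean.

From Stdlib Require Import Classical.
From mathcomp Require classical_sets.

(* Every condition is shown equivalent to the bounded dichotomy: each subset
   of X is bounded or has bounded complement.  The key facts about a discrete
   ballean are that a large set has bounded complement, that disjoint sets are
   asymptotically disjoint, and that the square of an unbounded set is never
   an entourage.  From these, ultradiscreteness, extreme normality and
   ultranormality reduce to the dichotomy directly, and irresolvability always
   holds.  Maximality follows from the dichotomy because a new entourage E'
   moves an unbounded set of points, and a maximal E'-independent subset of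
   it (Zorn's lemma) produces an unbounded set that becomes bounded; the
   dichotomy then makes all of X bounded.  Conversely, if A and its complement
   W were both unbounded, gluing W into a single "point" would give a
   strictly larger coarse structure in which A remains unbounded. *)


Lemma maximal_independent_subset {X : Type} (R : X -> X -> Prop) (S : X -> Prop) :
  exists D : X -> Prop,
    (forall x, D x -> S x) /\
    (forall x y, D x -> D y -> R x y -> x = y) /\
    (forall x, S x -> ~ D x -> exists y, D y /\ y <> x /\ (R x y \/ R y x)).
Proof.
set (independent := fun D : X -> Prop =>
  (forall x, D x -> S x) /\ (forall x y, D x -> D y -> R x y -> x = y)).
destruct (@classical_sets.Zorn_bigcup X independent) as [D [[DS Dind] Dmax]].
- intros F Find Fchain. split.
  + intros x [D FD Dx]. exact (proj1 (Find D FD) x Dx).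
  + intros x y [D1 FD1 D1x] [D2 FD2 D2y].
    destruct (Fchain D1 D2 FD1 FD2) as [sub | sub].
    * exact (proj2 (Find D2 FD2) x y (sub x D1x) D2y).
    * exact (proj2 (Find D1 FD1) x y D1x (sub y D2y)).
- exists D. split; [exact DS | split; [exact Dind |]].
  intros x Sx nDx. apply NNPP. intros no_neighbour.
  apply (Dmax (fun z => D z \/ z = x)).
  + split; [intros z Dz; left; exact Dz |].
    intros back. exact (nDx (back x (or_intror eq_refl))).
  + split.
    * intros z [Dz | ->]; auto.
    * intros a b [Da | ->] [Db | ->] Rab; auto;
        apply NNPP; intros neq; apply no_neighbour; eauto 6.
Qed.

Lemma bounded_sub {X : Type} {EE : coarse_family X} {Y Z} :
  bounded EE Y -> (forall x, Z x -> Y x) -> bounded EE Z.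
Proof. intros [x [E [HE HY]]] ZY. exists x, E. split; auto. Qed.

Lemma bounded_ball {X : Type} {EE : coarse_family X} {E} x :
  EE E -> bounded EE (ball E x).
Proof. intros HE. exists x, E. split; [exact HE | intros y Exy; exact Exy]. Qed.

Lemma bounded_mono {X : Type} {EE EE' : coarse_family X} {B} :
  (forall E, EE E -> EE' E) -> bounded EE B -> bounded EE' B.
Proof. intros inc [x [E [HE HB]]]. exists x, E. split; auto. Qed.

Section CoarseStructure.
Context {X : Type} {EE : coarse_family X} (cs : coarse_structure EE).

Lemma entourage_refl {E} x : EE E -> E x x.
Proof. destruct cs as [refl _]. intros HE. exact (refl E HE x). Qed.

Lemma entourage_comp {E F} : EE E -> EE F -> EE (comp E F).
Proof. destruct cs as [_ [closed _]]. exact (closed E F). Qed.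

Lemma entourage_inv {E} : EE E -> EE (inv E).
Proof. destruct cs as [_ [_ [closed _]]]. exact (closed E). Qed.

Lemma entourage_sub {E E'} :
  EE E -> contains_diag E' -> (forall x y, E' x y -> E x y) -> EE E'.
Proof. destruct cs as [_ [_ [_ [closed _]]]]. exact (closed E E'). Qed.

Lemma entourage_cover x y : exists E, EE E /\ E x y.
Proof. destruct cs as [_ [_ [_ [_ cover]]]]. exact (cover x y). Qed.

(* The symmetrization of an entourage is an entourage: it lies in E o E^-1. *)
Lemma entourage_sym {E} : EE E -> EE (fun x y => E x y \/ E y x).
Proof.
intros HE. apply (entourage_sub (entourage_comp HE (entourage_inv HE))).
- intros x. left. exact (entourage_refl x HE).
- intros x y [Exy | Eyx].
  + exists y. split; [exact Exy | exact (entourage_refl y HE)].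
  + exists x. split; [exact (entourage_refl x HE) | exact Eyx].
Qed.

(* A union of two bounded sets is bounded: their centers are joined by an
   entourage. *)
Lemma bounded_union {Y Z} :
  bounded EE Y -> bounded EE Z -> bounded EE (fun x => Y x \/ Z x).
Proof.
intros [y0 [E [HE HY]]] [z0 [F [HF HZ]]].
destruct (entourage_cover y0 z0) as [G [HG Gyz]].
exists y0, (comp E (comp G F)). split.
- exact (entourage_comp HE (entourage_comp HG HF)).
- intros y [Yy | Zy].
  + exists y. split; [exact (HY y Yy) |].
    exact (entourage_refl y (entourage_comp HG HF)).
  + exists y0. split; [exact (entourage_refl y0 HE) |].
    exists z0. split; [exact Gyz | exact (HZ y Zy)].
Qed.

Lemma bounded_ballA {E B} : EE E -> bounded EE B -> bounded EE (ballA E B).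
Proof.
intros HE [x0 [F [HF HB]]]. exists x0, (comp F E). split.
- exact (entourage_comp HF HE).
- intros y [b [Bb Eby]]. exists b. split; [exact (HB b Bb) | exact Eby].
Qed.

Lemma bounded_singleton x : bounded EE (fun y => y = x).
Proof.
destruct (entourage_cover x x) as [E [HE _]].
exists x, E. split; [exact HE |]. intros y ->. exact (entourage_refl x HE).
Qed.

(* The square Y x Y, together with the diagonal, is an entourage when Y is
   bounded: it lies in F^-1 o F for any F with Y included in F[x0]. *)
Lemma bounded_square {Y} :
  bounded EE Y -> EE (fun x y => x = y \/ (Y x /\ Y y)).
Proof.
intros [x0 [F [HF HY]]].
assert (HFF : EE (comp (inv F) F)) by exact (entourage_comp (entourage_inv HF) HF).
apply (entourage_sub HFF).
- intros x. left. reflexivity.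
- intros x y [<- | [Yx Yy]].
  + exact (entourage_refl x HFF).
  + exists x0. split; [exact (HY x Yx) | exact (HY y Yy)].
Qed.

Lemma large_of_cobounded {A} :
  unbounded_ballean EE -> bounded EE (fun x => ~ A x) -> large EE A.
Proof.
intros ub [x0 [F [HF HA]]].
destruct (classic (exists a, A a)) as [[a Aa] | noA].
- destruct (entourage_cover a x0) as [G [HG Gax]].
  exists (comp G F). split; [exact (entourage_comp HG HF) |].
  intros y. destruct (classic (A y)) as [Ay | nAy].
  + exists y. split; [exact Ay | exact (entourage_refl y (entourage_comp HG HF))].
  + exists a. split; [exact Aa |]. exists x0. split; [exact Gax | exact (HA y nAy)].
- exfalso. apply ub. exists x0, F. split; [exact HF |].
  intros y _. apply HA. intros Ay. apply noA. exists y. exact Ay.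
Qed.

(* Asymptotically disjoint sets have bounded intersection (take any
   entourage E: Y and Z meet inside E[Y] and E[Z]). *)
Lemma bounded_meet_of_asd {Y Z E} :
  EE E -> asymptotically_disjoint EE Y Z -> bounded EE (fun x => Y x /\ Z x).
Proof.
intros HE asd. apply (bounded_sub (asd E HE)). intros x [Yx Zx].
split; exists x; split; auto; exact (entourage_refl x HE).
Qed.

(* A reflexive relation that is not an entourage moves an unbounded set of
   points: otherwise it would lie in the square of a bounded set. *)
Lemma moving_points_unbounded {E'} :
  contains_diag E' -> ~ EE E' ->
  ~ bounded EE (fun x => exists y, y <> x /\ (E' x y \/ E' y x)).
Proof.
intros DE' nE' bS. apply nE', (entourage_sub (bounded_square bS) DE').
intros x y E'xy. destruct (classic (x = y)) as [eq | neq]; [left; exact eq |].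
right. split.
- exists y. split; [intros <-; apply neq; reflexivity | left; exact E'xy].
- exists x. split; [exact neq | right; exact E'xy].
Qed.

End CoarseStructure.

Lemma cobounded_family_iff {X : Type} {EE : coarse_family X} {A} :
  cobounded_family EE A <-> bounded EE (fun x => ~ A x).
Proof.
split.
- intros [B [HB HA]]. apply (bounded_sub HB). intros x nAx.
  apply NNPP. intros nBx. exact (nAx (proj2 (HA x) nBx)).
- intros HB. exists (fun x => ~ A x). split; [exact HB |].
  intros x. split; [intros Ax nAx; exact (nAx Ax) | apply NNPP].
Qed.

(* Every subset is bounded or has bounded complement; for a discrete
   unbounded ballean each condition of the theorem is equivalent to this. *)
Definition bounded_dichotomy {X : Type} (EE : coarse_family X) : Prop :=
  forall A : X -> Prop, bounded EE A \/ bounded EE (fun x => ~ A x).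

Section Discrete.
Context {X : Type} {EE : coarse_family X}.
Context (cs : coarse_structure EE) (dis : discrete EE).

(* In a discrete ballean a large set A has bounded complement: E moves only
   the points of a bounded set B, so a point reached from A but not in A is
   reached from B. *)
Lemma cobounded_of_large {A} : large EE A -> bounded EE (fun x => ~ A x).
Proof.
intros [E [HE HA]]. destruct (dis E HE) as [B [HB Bfix]].
apply (bounded_sub (bounded_ballA cs HE HB)).
intros y nAy. destruct (HA y) as [a [Aa Eay]].
destruct (classic (B a)) as [Ba | nBa].
- exists a. split; [exact Ba | exact Eay].
- apply (Bfix a nBa y) in Eay. subst y. contradiction.
Qed.

Lemma asd_of_disjoint Y Z :
  (forall x, Y x -> Z x -> False) -> asymptotically_disjoint EE Y Z.
Proof.
intros disj E HE. destruct (dis E HE) as [B [HB Bfix]].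
apply (bounded_sub (bounded_ballA cs HE HB)).
intros x [[y [Yy Eyx]] [z [Zz Ezx]]].
destruct (classic (B y)) as [By | nBy]; [exists y; split; assumption |].
destruct (classic (B z)) as [Bz | nBz]; [exists z; split; assumption |].
apply (Bfix y nBy x) in Eyx. apply (Bfix z nBz x) in Ezx. subst x z.
exfalso. exact (disj y Yy Zz).
Qed.

Lemma square_not_entourage W :
  ~ bounded EE W -> ~ EE (fun x y => x = y \/ (W x /\ W y)).
Proof.
intros nW HW. destruct (dis _ HW) as [B [HB Bfix]]. apply nW.
destruct (classic (exists w, W w /\ ~ B w)) as [[w [Ww nBw]] | inB].
- apply (bounded_sub (bounded_singleton cs w)). intros v Wv.
  apply (Bfix w nBw v). right. split; assumption.
- apply (bounded_sub HB). intros v Wv. apply NNPP. intros nBv.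
  apply inB. exists v. split; assumption.
Qed.

(* A maximal discrete ballean has a point: on the empty set a discrete ballean
   has no entourage at all, and the family of all relations is strictly larger. *)
Lemma maximal_inhabited : maximal EE -> exists x : X, True.
Proof.
intros [_ mx]. apply NNPP. intros empty.
assert (no_entourage : forall E, ~ EE E).
{ intros E HE. destruct (dis E HE) as [B [[x _] _]]. apply empty. exists x. exact I. }
destruct (mx (fun _ => True)) as [x _].
- split; [| split; [| split; [| split]]]; try (intros; exact I).
  + intros E _ x. exfalso. apply empty. exists x. exact I.
  + intros x. exfalso. apply empty. exists x. exact I.
- split; [auto |]. exists (fun _ _ => True). split; [exact I | apply no_entourage].
- apply empty. exists x. exact I.
Qed.

(* The coarse structure obtained by gluing the set W to a point: its
   entourages are, up to a bounded set B, entourages of EE together with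
   pairs inside W. *)
Definition glue (W : X -> Prop) : coarse_family X := fun E =>
  contains_diag E /\ exists E0 B, EE E0 /\ bounded EE B /\
    forall x y, E x y -> E0 x y \/ ((W x \/ B x) /\ (W y \/ B y)).

(* Composition is where discreteness is used: a non-trivial step of E0 starts
   in the bounded set moved by E0, a non-trivial step of F0 ends in F0[BF]. *)
Lemma glue_comp W E F : glue W E -> glue W F -> glue W (comp E F).
Proof.
intros [DE [E0 [B1 [HE0 [HB1 HE]]]]] [DF [F0 [B2 [HF0 [HB2 HF]]]]].
destruct (dis _ HE0) as [BE [HBE BEfix]].
destruct (dis _ HF0) as [BF [HBF BFfix]].
split; [intros x; exists x; split; [apply DE | apply DF] |].
exists (comp E0 F0), (fun x => B1 x \/ B2 x \/ BE x \/ ballA F0 BF x).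
split; [exact (entourage_comp cs HE0 HF0) |].
split.
{ apply (bounded_union cs HB1), (bounded_union cs HB2), (bounded_union cs HBE).
  exact (bounded_ballA cs HF0 HBF). }
intros x z [y [Exy Fyz]].
destruct (HE x y Exy) as [e | e]; destruct (HF y z Fyz) as [f | f].
- left. exists y. split; assumption.
- right. destruct (classic (BE x)) as [bx | nbx]; [tauto |].
  apply (BEfix x nbx y) in e. subst y. tauto.
- right. destruct (classic (BF y)) as [by_ | nby].
  + assert (ballA F0 BF z) by (exists y; split; assumption). tauto.
  + apply (BFfix y nby z) in f. subst z. tauto.
- right. tauto.
Qed.

Lemma glue_coarse W : coarse_structure (glue W).
Proof.
split; [| split; [| split; [| split]]].
- intros E [DE _]. exact DE.
- exact (glue_comp W).
- intros E [DE [E0 [B [HE0 [HB HE]]]]]. split; [intros x; apply DE |].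
  exists (inv E0), B. split; [exact (entourage_inv cs HE0) |]. split; [exact HB |].
  intros x y Eyx. destruct (HE y x Eyx) as [e | e]; [left; exact e | right; tauto].
- intros E E' [_ [E0 [B [HE0 [HB HE]]]]] DE' sub. split; [exact DE' |].
  exists E0, B. split; [exact HE0 |]. split; [exact HB |].
  intros x y E'xy. exact (HE x y (sub x y E'xy)).
- intros x y. destruct (entourage_cover cs x y) as [E [HE Exy]].
  exists E. split; [| exact Exy]. split; [intros z; exact (entourage_refl cs z HE) |].
  exists E, (fun z => z = x). split; [exact HE |].
  split; [exact (bounded_singleton cs x) | left; assumption].
Qed.

Section Unbounded.
Context (ub : unbounded_ballean EE).

Lemma dichotomy_inhabited : bounded_dichotomy EE -> exists x : X, True.
Proof.
intros dich. destruct (dich (fun _ => True)) as [bX | [x _]].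
- contradiction.
- exists x. exact I.
Qed.

(* Unbounded sets are large exactly when they have bounded complement. *)
Lemma extremely_normal_iff_dichotomy : extremely_normal EE <-> bounded_dichotomy EE.
Proof.
split.
- intros [_ en] A. destruct (classic (bounded EE A)) as [bA | nA]; [left; exact bA |].
  right. exact (cobounded_of_large (en A nA)).
- intros dich. split; [exact ub |]. intros Y nY. apply (large_of_cobounded cs ub).
  destruct (dich Y) as [bY | bnY]; [contradiction | exact bnY].
Qed.

(* The cobounded sets always form a filter once X is nonempty; they form an
   ultrafilter exactly under the dichotomy. *)
Lemma ultradiscrete_iff_dichotomy : ultradiscrete EE <-> bounded_dichotomy EE.
Proof.
split.
- intros [_ [_ [_ [_ [_ [_ ultra]]]]]] A.
  destruct (ultra A) as [cA | cnA].
  + right. apply cobounded_family_iff. exact cA.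
  + left. apply cobounded_family_iff in cnA. apply (bounded_sub cnA).
    intros x Ax nAx. exact (nAx Ax).
- intros dich. destruct (dichotomy_inhabited dich) as [x0 _].
  split; [exact ub | split; [exact dis |]].
  split; [| split; [| split; [| split]]].
  + apply cobounded_family_iff. apply (bounded_sub (bounded_singleton cs x0)).
    intros x nT. exfalso. exact (nT I).
  + intros cF. apply cobounded_family_iff in cF. apply ub, (bounded_sub cF).
    intros x _ f. exact f.
  + intros A C cA AC. apply cobounded_family_iff in cA. apply cobounded_family_iff.
    apply (bounded_sub cA). intros x nCx Ax. exact (nCx (AC x Ax)).
  + intros A C cA cC. apply cobounded_family_iff in cA, cC.
    apply cobounded_family_iff, (bounded_sub (bounded_union cs cA cC)).
    intros x nAC. apply NNPP. intros both. apply nAC. split; apply NNPP; tauto.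
  + intros A. destruct (dich A) as [bA | bnA].
    * right. apply cobounded_family_iff, (bounded_sub bA). intros x nnAx. exact (NNPP _ nnAx).
    * left. apply cobounded_family_iff. exact bnA.
Qed.

(* A set and its complement are asymptotically disjoint; conversely, two
   asymptotically disjoint sets meet in a bounded set. *)
Lemma ultranormal_iff_dichotomy : ultranormal EE <-> bounded_dichotomy EE.
Proof.
split.
- intros [_ un] A. destruct (classic (bounded EE A)) as [bA | nA]; [left; exact bA |].
  destruct (classic (bounded EE (fun x => ~ A x))) as [bnA | nnA]; [right; exact bnA |].
  exfalso. apply un. exists A, (fun x => ~ A x). split; [exact nA | split; [exact nnA |]].
  apply asd_of_disjoint. intros x Ax nAx. exact (nAx Ax).
- intros dich. split; [exact ub |]. intros [Y [Z [nY [nZ asd]]]].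
  destruct (dichotomy_inhabited dich) as [x0 _].
  destruct (entourage_cover cs x0 x0) as [E [HE _]].
  destruct (dich Y) as [bY | bnY]; [contradiction |].
  apply nZ, (bounded_sub (bounded_union cs (bounded_meet_of_asd cs HE asd) bnY)).
  intros x Zx. destruct (classic (Y x)) as [Yx | nYx]; [left | right]; tauto.
Qed.

(* Under the dichotomy, a larger coarse structure that bounds some
   EE-unbounded set T bounds everything, since the complement of T is
   already EE-bounded. *)
Lemma total_bounded_of_new_bounded {EE'} T :
  coarse_structure EE' -> bounded_dichotomy EE -> (forall E, EE E -> EE' E) ->
  ~ bounded EE T -> bounded EE' T -> bounded EE' (fun _ => True).
Proof.
intros cs' dich inc nT bT. destruct (dich T) as [bT' | bnT]; [contradiction |].
apply (bounded_sub (bounded_union cs' bT (bounded_mono inc bnT))).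
intros x _. apply classic.
Qed.

(* A new entourage E' moves an unbounded set S
   of points; a maximal independent set D for the symmetrization R of E'
   inside S yields a new-bounded, EE-unbounded set: D itself if D is
   EE-unbounded (then D lies in R[X \ D], with X \ D bounded), and S \ D
   otherwise (then S \ D lies in R[D]). *)
Lemma maximal_of_dichotomy : bounded_dichotomy EE -> maximal EE.
Proof.
intros dich. split; [exact ub |]. intros EE' cs' [inc [E' [HE' nE']]].
set (R := fun x y => E' x y \/ E' y x).
assert (HR : EE' R) by exact (entourage_sym cs' HE').
set (S := fun x => exists y, y <> x /\ R x y).
assert (nS : ~ bounded EE S).
{ exact (moving_points_unbounded cs (fun x => entourage_refl cs' x HE') nE'). }
destruct (maximal_independent_subset R S) as [D [DS [Dind Dmax]]].
destruct (classic (bounded EE D)) as [bD | nD].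
- apply (total_bounded_of_new_bounded (fun x => S x /\ ~ D x) cs' dich inc).
  + intros bSD. apply nS, (bounded_sub (bounded_union cs bD bSD)).
    intros x Sx. destruct (classic (D x)); [left | right]; tauto.
  + apply (bounded_sub (bounded_ballA cs' HR (bounded_mono inc bD))).
    intros x [Sx nDx]. destruct (Dmax x Sx nDx) as [y [Dy [_ Rxy]]].
    exists y. split; [exact Dy | unfold R in *; tauto].
- apply (total_bounded_of_new_bounded D cs' dich inc nD).
  destruct (dich D) as [bD | bnD]; [contradiction |].
  apply (bounded_sub (bounded_ballA cs' HR (bounded_mono inc bnD))).
  intros x Dx. destruct (DS x Dx) as [y [neq Rxy]].
  exists y. split; [| unfold R in *; tauto].
  intros Dy. exact (neq (eq_sym (Dind x y Dx Dy Rxy))).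
Qed.

(* Maximality implies dichotomy: if A and its complement W were both
   unbounded, gluing W would give a strictly larger coarse structure in which
   X, hence A, stays unbounded. *)
Lemma dichotomy_of_maximal : maximal EE -> bounded_dichotomy EE.
Proof.
intros max A. destruct (maximal_inhabited max) as [x0 _].
destruct max as [_ mx].
destruct (classic (bounded EE A)) as [bA | nA]; [left; exact bA |].
apply NNPP. intros nW. apply nA.
set (W := fun x => ~ A x).
destruct (entourage_cover cs x0 x0) as [E0 [HE0 _]].
destruct (mx (glue W) (glue_coarse W)) as [x [G [[_ [G0 [B [HG0 [HB HG]]]]] HX]]].
- split.
  + intros E HE. split; [intros z; exact (entourage_refl cs z HE) |].
    exists E, (fun z => z = x0). split; [exact HE |].
    split; [exact (bounded_singleton cs x0) | left; assumption].
  + exists (fun x y => x = y \/ (W x /\ W y)). split.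
    * split; [intros z; left; reflexivity |].
      exists E0, (fun z => z = x0). split; [exact HE0 |].
      split; [exact (bounded_singleton cs x0) |].
      intros y z [<- | [Wy Wz]]; [left; exact (entourage_refl cs y HE0) | right; tauto].
    * apply square_not_entourage. intros bW. apply nW. right. exact bW.
- apply (bounded_sub (bounded_union cs (bounded_ball x HG0) HB)).
  intros y Ay. destruct (HG x y (HX y I)) as [g | [_ [Wy | By]]].
  + left. exact g.
  + exfalso. exact (Wy Ay).
  + right. exact By.
Qed.

(* A discrete unbounded ballean is never resolvable: two complementary large
   sets would both be bounded. *)
Lemma irresolvable_of_discrete : irresolvable EE.
Proof.
split; [exact ub |]. intros [A [lA lnA]].
apply ub, (bounded_sub (bounded_union cs (cobounded_of_large lA) (cobounded_of_large lnA))).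
intros x _. destruct (classic (A x)) as [Ax | nAx]; [right | left]; tauto.
Qed.

End Unbounded.
End Discrete.

Theorem theorem2 (X : Type) (EE : (X -> X -> Prop) -> Prop) :
  coarse_structure EE -> unbounded_ballean EE -> discrete EE ->
  (ultradiscrete EE <-> extremely_normal EE) /\
  (extremely_normal EE <-> ultranormal EE) /\
  (ultranormal EE <-> (maximal EE /\ irresolvable EE)).
Proof.
intros cs ub dis.
rewrite (ultradiscrete_iff_dichotomy cs dis ub), (extremely_normal_iff_dichotomy cs dis ub),
  (ultranormal_iff_dichotomy cs dis ub).
split; [reflexivity | split; [reflexivity | split]].
- intros dich. split.
  + exact (maximal_of_dichotomy cs ub dich).
  + exact (irresolvable_of_discrete cs dis ub).
- intros [max _]. exact (dichotomy_of_maximal cs dis max).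
Qed.
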